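(* Let $\lambda>0$, $x>0$, and let $X^*$ and $H$ be as in the context. Then 1. $\displaystyle\lim_{\varepsilon\to1}\mathbb{E}\big[e^{-xX^*}H(x,\varepsilon X^* )\big]=\frac{e^{-2\lambda}}{1-e^{-\lambda}}\exp[\lambda e^{-x}-x]\left\{\exp[\lambda e^{-x}]\,Q_1\!\left(\sqrt{2\lambda e^{-x}},\sqrt{2\lambda e^{-x}}\right)-1\right\}$; 2. $\displaystyle\lim_{\varepsilon\to\infty}\mathbb{E}\big[e^{-xX^*}H(x,\varepsilon X^* )\big]=\frac{e^{-2\lambda}}{1-e^{-\lambda}}\exp[\lambda e^{-x}-x]\left\{\exp[\lambda e^{-x}]-1\right\}$.
   Context: $X^*$ is a random variable with $\mathbb{P}(X^*=k)=e^{-\lambda}\lambda^{k-1}/(k-1)!$, $k=1,2,\ldots$. For $x>0$ and real $s>0$, $H(x,s):=\frac{e^{-\lambda}}{1-e^{-\lambda}}\left\{\frac{\exp[\lambda e^{-x}]\,\Gamma(s,\lambda e^{-x})}{\Gamma(s)}-1\right\}$, with $\Gamma(s,y)=\int_y^\infty t^{s-1}e^{-t}dt$ the upper incomplete gamma function. $Q_\nu(a,b)=a^{1-\nu}\int_b^\infty t^\nu\exp[-(t^2+a^2)/2]\,I_{\nu-1}(at)\,dt$ is the generalized Marcum Q-function of order $\nu$, where $I_\nu$ is the modified Bessel function of the first kind of order $\nu$. *)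

From Stdlib Require Import Reals Factorial.
From Coquelicot Require Import Coquelicot.
Open Scope R_scope.

Definition upper_gamma (s y : R) : R :=
  RInt_gen (fun t => Rpower t (s - 1) * exp (- t)) (at_point y) (Rbar_locally p_infty).

Definition Gamma_fun (s : R) : R :=
  RInt_gen (fun t => Rpower t (s - 1) * exp (- t)) (at_right 0) (Rbar_locally p_infty).

Definition H (lam x s : R) : R :=
  exp (- lam) / (1 - exp (- lam)) *
  (exp (lam * exp (- x)) * upper_gamma s (lam * exp (- x)) / Gamma_fun s - 1).

Definition BesselI0 (z : R) : R :=
  Series (fun k => (z / 2) ^ (2 * k) / (INR (Factorial.fact k)) ^ 2).

Definition MarcumQ1 (a b : R) : R :=
  RInt_gen (fun t => t * exp (- (t ^ 2 + a ^ 2) / 2) * BesselI0 (a * t))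
           (at_point b) (Rbar_locally p_infty).

Definition pmf_Xstar (lam : R) (k : nat) : R :=
  exp (- lam) * lam ^ (k - 1) / INR (Factorial.fact (k - 1)).

Definition E_Xstar (lam : R) (g : R -> R) : R :=
  Series (fun n => pmf_Xstar lam (S n) * g (INR (S n))).

(* With y = lam e^(-x), the n-th term of the expectation is the Poisson(y) weight y^n/n! times
   an affine function of the ratio Gamma(eps (n+1), y) / Gamma(eps (n+1)), which lies in [0, 1];
   Tannery's theorem therefore reduces both limits to limits of this ratio.  As eps -> 1 it tends
   to Gamma(n+1, y) / n! = P(Poisson(y) <= n), by continuity of the incomplete gamma functions at
   integers; as eps -> oo it tends to 1, because the lower incomplete part is at most y^s / s.
   Expanding I_0 into its power series and integrating termwise gives
   Q_1(a, a) = e^(-y) sum_n y^n/n! P(Poisson(y) <= n) for a = sqrt(2y), which identifies the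
   first limit. *)

From Stdlib Require Import Reals Factorial Lra Lia.
From Coquelicot Require Import Coquelicot.
Open Scope R_scope.

(** * Limits along filters and dominated convergence for series *)

Section FilterLimits.
Context {T : Type} (F : (T -> Prop) -> Prop).

Lemma filterlim_le_R {FF : ProperFilter F} (f g : T -> R) (l m : R) :
  F (fun e => f e <= g e) -> filterlim f F (locally l) -> filterlim g F (locally m) ->
  l <= m.
Proof.
  intros Hfg Hf Hg.
  assert (FF' : ProperFilter' F) by (apply Proper_StrongProper; exact FF).
  exact (filterlim_le f g (Finite l) (Finite m) Hfg Hf Hg).
Qed.

Lemma filterlim_Rabs_R {FF : Filter F} (f : T -> R) (l : R) :
  filterlim f F (locally l) -> filterlim (fun e => Rabs (f e)) F (locally (Rabs l)).
Proof. intros Hf. apply (filterlim_comp _ _ _ f Rabs F (locally l)); auto. apply continuous_Rabs. Qed.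

Lemma filterlim_Rabs_le {FF : ProperFilter F} (f : T -> R) (l b : R) :
  F (fun e => Rabs (f e) <= b) -> filterlim f F (locally l) -> Rabs l <= b.
Proof.
  intros Hb Hf.
  apply (filterlim_le_R (fun e => Rabs (f e)) (fun _ => b)); auto.
  - apply filterlim_Rabs_R; auto.
  - apply filterlim_const.
Qed.

Lemma filterlim_affine {FF : Filter F} (f : T -> R) (l a c : R) :
  filterlim f F (locally l) -> filterlim (fun e => a + c * f e) F (locally (a + c * l)).
Proof.
  intros Hf. apply (filterlim_comp _ _ _ f (fun u => a + c * u) F (locally l)); auto.
  assert (Hc : continuous (fun u => a + c * u) l).
  { apply (@ex_derive_continuous R_AbsRing R_NormedModule). auto_derive. easy. }
  exact Hc.
Qed.

Lemma filterlim_minus_R {FF : Filter F} (f g : T -> R) (l m : R) :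
  filterlim f F (locally l) -> filterlim g F (locally m) ->
  filterlim (fun e => f e - g e) F (locally (l - m)).
Proof.
  intros Hf Hg. apply filterlim_locally. intros eps.
  assert (He : 0 < eps / 2) by (destruct eps; simpl; lra).
  apply filter_imp with (2 := filter_and _ _ (proj1 (filterlim_locally _ _) Hf (mkposreal _ He))
                                              (proj1 (filterlim_locally _ _) Hg (mkposreal _ He))).
  intros e [H1 H2]. change (Rabs (f e - l) < eps / 2) in H1. change (Rabs (g e - m) < eps / 2) in H2.
  change (Rabs (f e - g e - (l - m)) < eps).
  apply Rabs_lt_between in H1. apply Rabs_lt_between in H2. apply Rabs_lt_between. lra.
Qed.

Lemma filterlim_bound_0 {FF : Filter F} (u v : T -> R) (l : R) :
  F (fun e => Rabs (u e - l) <= v e) -> filterlim v F (locally 0) -> filterlim u F (locally l).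
Proof.
  intros Huv Hv. apply filterlim_locally. intros eps.
  apply filter_imp with (2 := filter_and _ _ Huv (proj1 (filterlim_locally _ _) Hv eps)).
  intros e [H1 H2]. change (Rabs (u e - l) < eps). change (Rabs (v e - 0) < eps) in H2.
  apply Rabs_lt_between in H2. lra.
Qed.

Lemma filter_forall_lt {FF : Filter F} (P : nat -> T -> Prop) :
  (forall n, F (P n)) -> forall N, F (fun e => forall n, (n < N)%nat -> P n e).
Proof.
  intros HP N; induction N as [|N IH].
  - apply filter_forall; intros e n Hn; lia.
  - apply filter_imp with (fun e => (forall n, (n < N)%nat -> P n e) /\ P N e).
    + intros e [H1 H2] n Hn. destruct (Nat.eq_dec n N) as [->|Hne]; auto. apply H1; lia.
    + apply filter_and; auto.
Qed.

End FilterLimits.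

Lemma filterlim_div_p_infty (C : R) : filterlim (fun b => C / b) (Rbar_locally p_infty) (locally 0).
Proof.
  assert (H := is_lim_scal_l (fun b => / b) C p_infty 0 (is_lim_inv (fun b => b) p_infty p_infty (is_lim_id p_infty) ltac:(discriminate))).
  simpl in H. rewrite Rmult_0_r in H. eapply filterlim_ext; [|exact H]. intro b. reflexivity.
Qed.

Lemma Rabs_sum_le_const (u : nat -> R) (d : R) (N : nat) :
  (forall n, (n <= N)%nat -> Rabs (u n) <= d) -> Rabs (sum_f_R0 u N) <= INR (S N) * d.
Proof.
  induction N as [|N IH]; intros Hu.
  - simpl. rewrite Rmult_1_l. apply Hu; lia.
  - simpl sum_f_R0. rewrite S_INR. eapply Rle_trans. apply Rabs_triang.
    assert (H1 := IH (fun n Hn => Hu n ltac:(lia))). assert (H2 := Hu (S N) ltac:(lia)). lra.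
Qed.

Lemma ex_series_Rabs_le (a b : nat -> R) :
  ex_series b -> (forall n, Rabs (a n) <= b n) -> ex_series a.
Proof.
  intros Hb Hab. apply ex_series_Rabs.
  apply (@ex_series_le R_AbsRing R_CompleteNormedModule _ b); auto.
  intro n. unfold norm; simpl. rewrite Rabs_Rabsolu. apply Hab.
Qed.

Lemma Rabs_Series_tail_le (a b : nat -> R) (N : nat) :
  ex_series b -> (forall n, Rabs (a n) <= b n) ->
  Rabs (Series (fun k => a (N + k)%nat)) <= Series (fun k => b (N + k)%nat).
Proof.
  intros Hb Hab. assert (HbN : ex_series (fun k => b (N + k)%nat)) by (apply ex_series_incr_n; exact Hb).
  eapply Rle_trans; [apply Series_Rabs|].
  - apply (ex_series_Rabs_le _ (fun k => b (N + k)%nat)); auto.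
    intro n. rewrite Rabs_Rabsolu. apply Hab.
  - apply Series_le; auto. intro n; split; [apply Rabs_pos | apply Hab].
Qed.

Lemma Series_tail_lt (b : nat -> R) (eps : R) : ex_series b -> 0 < eps ->
  exists N, Series (fun k => b (S N + k)%nat) < eps.
Proof.
  intros Hb He.
  destruct (proj1 (filterlim_locally _ _) (Series_correct _ Hb) (mkposreal _ He)) as [N HN].
  exists N. specialize (HN N (le_n _)).
  rewrite sum_n_Reals in HN. change (Rabs (sum_f_R0 b N - Series b) < eps) in HN.
  rewrite (Series_incr_n b (S N)) in HN by (lia || exact Hb).
  apply Rabs_lt_between in HN. simpl pred in HN. lra.
Qed.

Lemma filterlim_Series_dominated {T} (F : (T -> Prop) -> Prop) {FF : ProperFilter F}
  (g : T -> nat -> R) (l b : nat -> R) :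
  ex_series b -> F (fun e => forall n, Rabs (g e n) <= b n) ->
  (forall n, filterlim (fun e => g e n) F (locally (l n))) ->
  filterlim (fun e => Series (g e)) F (locally (Series l)).
Proof.
  intros Hb Hdom Hlim.
  assert (Hl : forall n, Rabs (l n) <= b n).
  { intro n. apply (filterlim_Rabs_le F (fun e => g e n)); auto.
    apply filter_imp with (2 := Hdom). intros e He; apply He. }
  apply filterlim_locally. intros eps.
  assert (He4 : 0 < eps / 4) by (destruct eps; simpl; lra).
  destruct (Series_tail_lt b (eps / 4) Hb He4) as [N HN].
  set (d := eps / (2 * INR (S N))).
  assert (Hd : 0 < d) by (apply Rdiv_lt_0_compat; [apply cond_pos | apply Rmult_lt_0_compat; [lra | apply lt_0_INR; lia]]).
  assert (Hfin := filter_forall_lt F (fun n e => Rabs (g e n - l n) < d)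
            (fun n => proj1 (filterlim_locally _ _) (Hlim n) (mkposreal d Hd)) (S N)).
  apply filter_imp with (2 := filter_and _ _ Hdom Hfin).
  intros e [He Hf]. change (Rabs (Series (g e) - Series l) < eps).
  rewrite (Series_incr_n (g e) (S N)), (Series_incr_n l (S N))
    by (lia || apply (ex_series_Rabs_le _ b); auto).
  simpl pred.
  assert (Hhead : Rabs (sum_f_R0 (g e) N - sum_f_R0 l N) <= INR (S N) * d).
  { rewrite <- minus_sum. apply Rabs_sum_le_const. intros n Hn. left. apply Hf. lia. }
  replace (INR (S N) * d) with (eps / 2) in Hhead by (unfold d; field; apply Rgt_not_eq, lt_0_INR; lia).
  assert (T1 := Rabs_Series_tail_le (g e) b (S N) Hb He).
  assert (T2 := Rabs_Series_tail_le l b (S N) Hb Hl).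
  apply Rabs_lt_between. apply Rabs_le_between in Hhead, T1, T2. lra.
Qed.

Lemma is_series_exp (y : R) : is_series (fun n => y ^ n / INR (fact n)) (exp y).
Proof.
  eapply (is_series_ext (V := R_NormedModule)); [|apply (is_exp_Reals y)].
  intro n. rewrite pow_n_pow. reflexivity.
Qed.

Lemma ex_series_exp (y : R) : ex_series (fun n => y ^ n / INR (fact n)).
Proof. eexists; apply is_series_exp. Qed.

Lemma Series_exp (y : R) : Series (fun n => y ^ n / INR (fact n)) = exp y.
Proof. apply is_series_unique, is_series_exp. Qed.

(** * Improper integrals *)

Lemma is_RInt_gen_at_point_l (f : R -> R) (a : R) (Fb : (R -> Prop) -> Prop) {FFb : Filter Fb}
  (I : R -> R) (l : R) :
  Fb (fun b => is_RInt f a b (I b)) -> filterlim I Fb (locally l) ->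
  is_RInt_gen f (at_point a) Fb l.
Proof.
  intros HI Hl P HP.
  apply (Filter_prod _ _ _ (fun x => x = a) (fun b => is_RInt f a b (I b) /\ P (I b))).
  - reflexivity.
  - apply filter_and; [exact HI | exact (Hl P HP)].
  - intros x b -> [Hb HPb]. exists (I b). split; auto.
Qed.

Lemma is_RInt_gen_at_point_r (f : R -> R) (c : R) (Fa : (R -> Prop) -> Prop) {FFa : Filter Fa}
  (I : R -> R) (l : R) :
  Fa (fun b => is_RInt f b c (I b)) -> filterlim I Fa (locally l) ->
  is_RInt_gen f Fa (at_point c) l.
Proof.
  intros HI Hl P HP.
  apply (Filter_prod _ _ _ (fun b => is_RInt f b c (I b) /\ P (I b)) (fun x => x = c)).
  - apply filter_and; [exact HI | exact (Hl P HP)].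
  - reflexivity.
  - intros b x [Hb HPb] ->. exists (I b). split; auto.
Qed.

Lemma filterlim_cauchy_dominated {T} (F : (T -> Prop) -> Prop) {FF : ProperFilter F}
  (f g : T -> R) (L : R) :
  filterlim g F (locally L) ->
  (exists P, F P /\ forall u v, P u -> P v -> Rabs (f u - f v) <= Rabs (g u - g v)) ->
  exists l, filterlim f F (locally l).
Proof.
  intros Hg [P [HP Hfg]].
  apply (filterlim_locally_cauchy (U := R_CompleteSpace)). intros eps.
  assert (He2 : 0 < eps / 2) by (destruct eps; simpl; lra).
  exists (fun u => P u /\ Rabs (g u - L) < eps / 2). split.
  - apply filter_and; auto.
    apply filter_imp with (2 := proj1 (filterlim_locally _ _) Hg (mkposreal _ He2)). auto.
  - intros u v [Pu Gu] [Pv Gv]. change (Rabs (f v - f u) < eps).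
    rewrite Rabs_minus_sym. eapply Rle_lt_trans; [apply Hfg; auto|].
    replace (g u - g v) with ((g u - L) - (g v - L)) by ring.
    eapply Rle_lt_trans; [apply Rabs_triang|]. rewrite Rabs_Ropp. lra.
Qed.

Lemma Rabs_RInt_le_nonneg (f g : R -> R) (a b : R) :
  ex_RInt f a b -> ex_RInt g a b ->
  (forall t, Rmin a b <= t <= Rmax a b -> 0 <= f t <= g t) ->
  Rabs (RInt f a b) <= Rabs (RInt g a b).
Proof.
  assert (Hle : forall u v, u <= v -> ex_RInt f u v -> ex_RInt g u v ->
            (forall t, u <= t <= v -> 0 <= f t <= g t) -> Rabs (RInt f u v) <= Rabs (RInt g u v)).
  { intros u v Huv Hf Hg Hfg.
    assert (0 <= RInt f u v) by (apply RInt_ge_0; auto; intros t Ht; apply Hfg; lra).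
    assert (RInt f u v <= RInt g u v) by (apply RInt_le; auto; intros t Ht; apply Hfg; lra).
    rewrite !Rabs_right by lra. lra. }
  intros Hf Hg Hfg. destruct (Rle_lt_dec a b) as [Hab|Hab].
  - rewrite Rmin_left, Rmax_right in Hfg by lra. apply Hle; auto.
  - rewrite Rmin_right, Rmax_left in Hfg by lra.
    rewrite <- (opp_RInt_swap f), <- (opp_RInt_swap g) by (apply ex_RInt_swap; auto).
    unfold opp; simpl. rewrite !Rabs_Ropp.
    apply Hle; [lra | apply ex_RInt_swap; exact Hf | apply ex_RInt_swap; exact Hg | exact Hfg].
Qed.

Lemma ex_RInt_gen_p_infty_dominated (f g : R -> R) (a M Lg : R) :
  (forall u v, a <= u -> a <= v -> ex_RInt f u v) ->
  (forall u v, a <= u -> a <= v -> ex_RInt g u v) ->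
  (forall t, M <= t -> 0 <= f t <= g t) ->
  filterlim (fun b => RInt g a b) (Rbar_locally p_infty) (locally Lg) ->
  exists l, is_RInt_gen f (at_point a) (Rbar_locally p_infty) l /\
    filterlim (fun b => RInt f a b) (Rbar_locally p_infty) (locally l).
Proof.
  intros Hf Hg Hfg HG.
  destruct (filterlim_cauchy_dominated _ (fun b => RInt f a b) (fun b => RInt g a b) Lg HG)
    as [l Hl].
  { exists (fun b => Rmax a M < b). split; [exists (Rmax a M); auto|].
    intros u v Hu Hv. generalize (Rmax_l a M) (Rmax_r a M); intros.
    assert (Ef : RInt f a v + RInt f v u = RInt f a u) by (apply (RInt_Chasles f a v u); apply Hf; lra).
    assert (Eg : RInt g a v + RInt g v u = RInt g a u) by (apply (RInt_Chasles g a v u); apply Hg; lra).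
    replace (RInt f a u - RInt f a v) with (RInt f v u) by lra.
    replace (RInt g a u - RInt g a v) with (RInt g v u) by lra.
    apply Rabs_RInt_le_nonneg; try (apply Hf || apply Hg; lra).
    intros t Ht. apply Hfg. assert (M <= Rmin v u) by (apply Rmin_glb; lra). lra. }
  exists l. split; auto.
  apply (is_RInt_gen_at_point_l f a _ (fun b => RInt f a b)); auto.
  exists a. intros b Hb. apply (@RInt_correct R_CompleteNormedModule). apply Hf; lra.
Qed.

Lemma ex_RInt_gen_0_dominated (f g : R -> R) (c Lg : R) :
  0 < c ->
  (forall u v, 0 < u -> 0 < v -> ex_RInt f u v) ->
  (forall u v, 0 < u -> 0 < v -> ex_RInt g u v) ->
  (forall t, 0 < t -> 0 <= f t <= g t) ->
  filterlim (fun b => RInt g b c) (at_right 0) (locally Lg) ->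
  exists l, is_RInt_gen f (at_right 0) (at_point c) l /\
    filterlim (fun b => RInt f b c) (at_right 0) (locally l).
Proof.
  intros Hc Hf Hg Hfg HG.
  destruct (filterlim_cauchy_dominated _ (fun b => RInt f b c) (fun b => RInt g b c) Lg HG)
    as [l Hl].
  { exists (fun b => 0 < b). split; [exists (mkposreal 1 Rlt_0_1); auto|].
    intros u v Hu Hv.
    assert (Ef : RInt f u v + RInt f v c = RInt f u c) by (apply (RInt_Chasles f u v c); apply Hf; lra).
    assert (Eg : RInt g u v + RInt g v c = RInt g u c) by (apply (RInt_Chasles g u v c); apply Hg; lra).
    replace (RInt f u c - RInt f v c) with (RInt f u v) by lra.
    replace (RInt g u c - RInt g v c) with (RInt g u v) by lra.
    apply Rabs_RInt_le_nonneg; try (apply Hf || apply Hg; lra).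
    intros t Ht. apply Hfg. assert (0 < Rmin u v) by (apply Rmin_glb_lt; lra). lra. }
  exists l. split; auto.
  apply (is_RInt_gen_at_point_r f c _ (fun b => RInt f b c)); auto.
  exists (mkposreal c Hc). intros b _ Hb. apply (@RInt_correct R_CompleteNormedModule). apply Hf; lra.
Qed.

(** * Incomplete gamma functions *)

Definition gamma_integrand (s t : R) : R := Rpower t (s - 1) * exp (- t).

Definition pow_exp (m : nat) (t : R) : R := t ^ m * exp (- t).

(* The regularized upper incomplete gamma function Q(m + 1, u). *)
Definition poisson_cdf (m : nat) (u : R) : R :=
  exp (- u) * sum_f_R0 (fun j => u ^ j / INR (fact j)) m.

Lemma exp_le_exp (u v : R) : u <= v -> exp u <= exp v.
Proof. intros [H|H]; [left; apply exp_increasing; exact H | right; rewrite H; reflexivity]. Qed.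

Lemma INR_S_ge_1 (m : nat) : 1 <= INR (S m).
Proof. rewrite S_INR. generalize (pos_INR m). lra. Qed.

Lemma Rpower_pos (t a : R) : 0 < Rpower t a.
Proof. apply exp_pos. Qed.

Lemma Rpower_1_l (a : R) : Rpower 1 a = 1.
Proof. unfold Rpower. rewrite ln_1, Rmult_0_r. apply exp_0. Qed.

Lemma continuous_Rpower (a z : R) : 0 < z -> continuous (fun t => Rpower t a) z.
Proof.
  intros Hz. apply (@ex_derive_continuous R_AbsRing R_NormedModule).
  exists (a * Rpower z (a - 1)). apply is_derive_Reals, derivable_pt_lim_power; auto.
Qed.

Lemma continuous_gamma_integrand (s z : R) : 0 < z -> continuous (gamma_integrand s) z.
Proof.
  intros Hz. apply (@continuous_mult R_UniformSpace R_AbsRing).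
  - apply continuous_Rpower; auto.
  - apply (@ex_derive_continuous R_AbsRing R_NormedModule). auto_derive. easy.
Qed.

Lemma continuous_pow_exp (m : nat) (z : R) : continuous (pow_exp m) z.
Proof. apply (@ex_derive_continuous R_AbsRing R_NormedModule). unfold pow_exp. auto_derive. easy. Qed.

Lemma ex_RInt_gamma_integrand (s u v : R) : 0 < u -> 0 < v -> ex_RInt (gamma_integrand s) u v.
Proof.
  intros Hu Hv. apply (@ex_RInt_continuous R_CompleteNormedModule). intros z Hz.
  apply continuous_gamma_integrand. assert (0 < Rmin u v) by (apply Rmin_glb_lt; auto). lra.
Qed.

Lemma gamma_integrand_pos (s t : R) : 0 < gamma_integrand s t.
Proof. apply Rmult_lt_0_compat; [apply Rpower_pos | apply exp_pos]. Qed.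

Lemma gamma_integrand_nat (m : nat) (t : R) : 0 < t -> gamma_integrand (INR (S m)) t = pow_exp m t.
Proof.
  intros Ht. unfold gamma_integrand, pow_exp. rewrite S_INR.
  replace (INR m + 1 - 1) with (INR m) by ring. rewrite Rpower_pow; auto.
Qed.

Lemma gamma_integrand_le_pow_exp (s t : R) (n : nat) :
  1 <= t -> s <= INR n -> gamma_integrand s t <= pow_exp n t.
Proof.
  intros Ht Hs. unfold gamma_integrand, pow_exp.
  apply Rmult_le_compat_r; [left; apply exp_pos|].
  rewrite <- Rpower_pow by lra. apply Rle_Rpower; lra.
Qed.

Lemma gamma_integrand_le_Rpower (s t : R) : 0 <= t -> gamma_integrand s t <= Rpower t (s - 1).
Proof.
  intros Ht. unfold gamma_integrand. rewrite <- (Rmult_1_r (Rpower t (s - 1))) at 2.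
  apply Rmult_le_compat_l; [left; apply Rpower_pos|].
  rewrite <- exp_0. apply exp_le_exp. lra.
Qed.

Lemma derivable_pt_lim_exp_opp (u : R) : derivable_pt_lim (fun t => exp (- t)) u (- exp (- u)).
Proof.
  replace (- exp (- u)) with (exp (- u) * -1) by ring.
  apply (derivable_pt_lim_comp (fun t => - t) exp).
  - apply derivable_pt_lim_opp, derivable_pt_lim_id.
  - apply derivable_pt_lim_exp.
Qed.

Lemma is_derive_poisson_cdf (m : nat) (u : R) :
  is_derive (poisson_cdf m) u (- pow_exp m u / INR (fact m)).
Proof.
  unfold poisson_cdf, pow_exp. apply is_derive_Reals. induction m as [|m IH].
  - assert (E : forall t, exp (- t) = exp (- t) * sum_f_R0 (fun j => t ^ j / INR (fact j)) 0)
      by (intro t; simpl; field).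
    apply (derivable_pt_lim_ext _ _ _ _ E).
    replace (- (u ^ 0 * exp (- u)) / INR (fact 0)) with (- exp (- u)) by (simpl; field).
    apply derivable_pt_lim_exp_opp.
  - assert (E : forall t, exp (- t) * sum_f_R0 (fun j => t ^ j / INR (fact j)) m
                            + exp (- t) * (t ^ S m / INR (fact (S m)))
                          = exp (- t) * sum_f_R0 (fun j => t ^ j / INR (fact j)) (S m)).
    { intro t. rewrite tech5. ring. }
    apply (derivable_pt_lim_ext _ _ _ _ E).
    replace (- (u ^ S m * exp (- u)) / INR (fact (S m))) with
      (- (u ^ m * exp (- u)) / INR (fact m)
       + (- exp (- u) * (u ^ S m / INR (fact (S m))) + exp (- u) * (INR (S m) * u ^ m / INR (fact (S m))))).
    + apply derivable_pt_lim_plus; [exact IH|].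
      apply (derivable_pt_lim_mult (fun t => exp (- t)) (fun t => t ^ S m / INR (fact (S m)))).
      * apply derivable_pt_lim_exp_opp.
      * unfold Rdiv. apply (derivable_pt_lim_scal_right (fun t => t ^ S m)), derivable_pt_lim_pow.
    + rewrite fact_simpl, mult_INR. simpl pow.
      field. split; [apply INR_fact_neq_0 | apply not_0_INR; lia].
Qed.

Lemma is_RInt_pow_exp (m : nat) (a b : R) :
  is_RInt (pow_exp m) a b (INR (fact m) * (poisson_cdf m a - poisson_cdf m b)).
Proof.
  assert (Hf : INR (fact m) <> 0) by apply INR_fact_neq_0.
  replace (INR (fact m) * (poisson_cdf m a - poisson_cdf m b)) with
    (minus (- INR (fact m) * poisson_cdf m b) (- INR (fact m) * poisson_cdf m a))
    by (unfold minus, plus, opp; simpl; ring).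
  apply (@is_RInt_derive R_CompleteNormedModule (fun u => - INR (fact m) * poisson_cdf m u)).
  - intros t _. replace (pow_exp m t) with (- INR (fact m) * (- pow_exp m t / INR (fact m)))
      by (field; auto).
    apply is_derive_Reals, derivable_pt_lim_scal, is_derive_Reals, is_derive_poisson_cdf.
  - intros t _. apply continuous_pow_exp.
Qed.

Lemma poisson_cdf_nonneg (m : nat) (u : R) : 0 <= u -> 0 <= poisson_cdf m u.
Proof.
  intros Hu. apply Rmult_le_pos; [left; apply exp_pos|].
  apply cond_pos_sum. intro n. apply Rdiv_le_0_compat; [apply pow_le; auto | apply INR_fact_lt_0].
Qed.

Lemma poisson_cdf_le_1 (m : nat) (u : R) : 0 <= u -> poisson_cdf m u <= 1.
Proof.
  intros Hu. unfold poisson_cdf. rewrite exp_Ropp.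
  apply (Rmult_le_reg_l (exp u)); [apply exp_pos|].
  rewrite <- Rmult_assoc, Rinv_r, Rmult_1_l, Rmult_1_r by apply exp_neq_0.
  apply exp_ge_taylor; auto.
Qed.

Lemma poisson_cdf_decreasing (m : nat) (u v : R) : 0 <= u <= v -> poisson_cdf m v <= poisson_cdf m u.
Proof.
  intros Huv. assert (Hf : 0 < INR (fact m)) by apply INR_fact_lt_0.
  assert (H : 0 <= RInt (pow_exp m) u v).
  { apply RInt_ge_0; [lra | eexists; apply is_RInt_pow_exp|].
    intros t Ht. apply Rmult_le_pos; [apply pow_le; lra | left; apply exp_pos]. }
  rewrite (is_RInt_unique _ _ _ _ (is_RInt_pow_exp m u v)) in H.
  apply (Rmult_le_reg_l (INR (fact m))); auto. lra.
Qed.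

Lemma poisson_cdf_0 (m : nat) : poisson_cdf m 0 = 1.
Proof.
  unfold poisson_cdf. rewrite Ropp_0, exp_0, Rmult_1_l.
  induction m as [|m IH]; [simpl; field|]. rewrite tech5, IH, pow_i by lia. unfold Rdiv. ring.
Qed.

Lemma filterlim_poisson_cdf_0 (m : nat) : filterlim (poisson_cdf m) (at_right 0) (locally 1).
Proof.
  rewrite <- (poisson_cdf_0 m). apply (filterlim_filter_le_1 (F := locally 0)).
  - intros P [e He]. exists e. intros y Hy _. apply He, Hy.
  - apply (@ex_derive_continuous R_AbsRing R_NormedModule). eexists. apply is_derive_poisson_cdf.
Qed.

Lemma pow_exp_le_div (m : nat) (b : R) : 0 < b -> pow_exp m b <= INR (fact (S m)) / b.
Proof.
  intros Hb. assert (Hf : 0 < INR (fact (S m))) by apply INR_fact_lt_0.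
  assert (Htaylor : b ^ S m / INR (fact (S m)) <= exp b).
  { eapply Rle_trans; [|apply (exp_ge_taylor b (S m)); lra].
    rewrite tech5. assert (0 <= sum_f_R0 (fun k => b ^ k / INR (fact k)) m); [|lra].
    apply cond_pos_sum. intro k. apply Rdiv_le_0_compat; [apply pow_le; lra | apply INR_fact_lt_0]. }
  unfold pow_exp. rewrite exp_Ropp. simpl pow in Htaylor.
  apply (Rmult_le_reg_r (exp b * b / INR (fact (S m)))).
  - apply Rdiv_lt_0_compat; [apply Rmult_lt_0_compat; [apply exp_pos | lra] | lra].
  - replace (b ^ m * / exp b * (exp b * b / INR (fact (S m)))) with (b * b ^ m / INR (fact (S m)))
      by (field; split; [lra | apply exp_neq_0]).
    replace (INR (fact (S m)) / b * (exp b * b / INR (fact (S m)))) with (exp b) by (field; lra).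
    exact Htaylor.
Qed.

Lemma filterlim_pow_exp_p_infty (m : nat) : filterlim (pow_exp m) (Rbar_locally p_infty) (locally 0).
Proof.
  apply (filterlim_bound_0 _ _ (fun b => INR (fact (S m)) / b)).
  - exists 0. intros b Hb. rewrite Rminus_0_r, Rabs_right.
    + apply pow_exp_le_div; auto.
    + apply Rle_ge, Rmult_le_pos; [apply pow_le; lra | left; apply exp_pos].
  - apply filterlim_div_p_infty.
Qed.

Lemma filterlim_poisson_cdf_p_infty (m : nat) :
  filterlim (poisson_cdf m) (Rbar_locally p_infty) (locally 0).
Proof.
  induction m as [|m IH].
  - apply (filterlim_ext (pow_exp 0)); [intro b; unfold pow_exp, poisson_cdf; simpl; field|].
    apply filterlim_pow_exp_p_infty.
  - apply (filterlim_ext (fun b => poisson_cdf m b - (- / INR (fact (S m))) * pow_exp (S m) b)).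
    { intro b. unfold poisson_cdf, pow_exp. rewrite tech5. field. apply INR_fact_neq_0. }
    assert (H := filterlim_affine _ _ _ 0 (- / INR (fact (S m))) (filterlim_pow_exp_p_infty (S m))).
    assert (L := filterlim_minus_R _ _ _ _ _ IH H).
    replace (0 - (0 + - / INR (fact (S m)) * 0)) with 0 in L by ring.
    eapply filterlim_ext; [|exact L]. intro b. simpl. ring.
Qed.

Lemma filterlim_RInt_pow_exp_p_infty (m : nat) (z : R) :
  filterlim (fun b => RInt (pow_exp m) z b) (Rbar_locally p_infty) (locally (INR (fact m) * poisson_cdf m z)).
Proof.
  apply (filterlim_ext (fun b => INR (fact m) * poisson_cdf m z + (- INR (fact m)) * poisson_cdf m b)).
  { intro b. rewrite (is_RInt_unique _ _ _ _ (is_RInt_pow_exp m z b)). ring. }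
  assert (H := filterlim_affine _ _ _ (INR (fact m) * poisson_cdf m z) (- INR (fact m))
                 (filterlim_poisson_cdf_p_infty m)).
  rewrite Rmult_0_r, Rplus_0_r in H. exact H.
Qed.

Lemma filterlim_RInt_pow_exp_0 (m : nat) (c : R) :
  filterlim (fun b => RInt (pow_exp m) b c) (at_right 0) (locally (INR (fact m) * (1 - poisson_cdf m c))).
Proof.
  apply (filterlim_ext (fun b => - INR (fact m) * poisson_cdf m c + INR (fact m) * poisson_cdf m b)).
  { intro b. rewrite (is_RInt_unique _ _ _ _ (is_RInt_pow_exp m b c)). ring. }
  assert (H := filterlim_affine _ _ _ (- INR (fact m) * poisson_cdf m c) (INR (fact m)) (filterlim_poisson_cdf_0 m)).
  replace (INR (fact m) * (1 - poisson_cdf m c)) with (- INR (fact m) * poisson_cdf m c + INR (fact m) * 1) by ring.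
  exact H.
Qed.

Lemma is_RInt_Rpower (s b c : R) : 0 < s -> 0 < b -> 0 < c ->
  is_RInt (fun t => Rpower t (s - 1)) b c ((Rpower c s - Rpower b s) / s).
Proof.
  intros Hs Hb Hc. assert (Hbc : 0 < Rmin b c) by (apply Rmin_glb_lt; auto).
  replace ((Rpower c s - Rpower b s) / s) with (minus (Rpower c s / s) (Rpower b s / s))
    by (unfold minus, plus, opp; simpl; field; lra).
  apply (@is_RInt_derive R_CompleteNormedModule (fun t => Rpower t s / s)).
  - intros t Ht. apply is_derive_Reals. unfold Rdiv.
    replace (Rpower t (s - 1)) with (s * Rpower t (s - 1) * / s) by (field; lra).
    apply (derivable_pt_lim_scal_right (fun t => Rpower t s)), derivable_pt_lim_power. lra.
  - intros t Ht. apply continuous_Rpower. lra.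
Qed.

Lemma filterlim_Rpower_0 (s : R) : 0 < s -> filterlim (fun b => Rpower b s) (at_right 0) (locally 0).
Proof.
  intros Hs. apply filterlim_locally. intros eps.
  exists (mkposreal _ (Rpower_pos eps (/ s))). intros b Hb Hb0.
  change (Rabs (b - 0) < Rpower eps (/ s)) in Hb. rewrite Rminus_0_r, Rabs_right in Hb by lra.
  change (Rabs (Rpower b s - 0) < eps). rewrite Rminus_0_r, Rabs_right by (left; apply Rpower_pos).
  replace (pos eps) with (Rpower (Rpower eps (/ s)) s).
  - apply Rlt_Rpower_l; auto.
  - rewrite Rpower_mult, Rinv_l, Rpower_1 by (lra || apply cond_pos). reflexivity.
Qed.

Definition lower_gamma (s c : R) : R := RInt_gen (gamma_integrand s) (at_right 0) (at_point c).

Lemma upper_gamma_spec (s z : R) : 0 < z ->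
  is_RInt_gen (gamma_integrand s) (at_point z) (Rbar_locally p_infty) (upper_gamma s z) /\
  filterlim (fun b => RInt (gamma_integrand s) z b) (Rbar_locally p_infty) (locally (upper_gamma s z)).
Proof.
  intros Hz. destruct (INR_unbounded s) as [n Hn].
  destruct (ex_RInt_gen_p_infty_dominated (gamma_integrand s) (pow_exp n) z 1
              (INR (fact n) * poisson_cdf n z)) as [l [Hl1 Hl2]].
  - intros u v Hu Hv. apply ex_RInt_gamma_integrand; lra.
  - intros u v _ _. apply (@ex_RInt_continuous R_CompleteNormedModule). intros; apply continuous_pow_exp.
  - intros t Ht. split; [left; apply gamma_integrand_pos | apply gamma_integrand_le_pow_exp; lra].
  - apply filterlim_RInt_pow_exp_p_infty.
  - replace (upper_gamma s z) with l by (symmetry; apply (is_RInt_gen_unique (gamma_integrand s)); auto).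
    auto.
Qed.

Lemma lower_gamma_spec (s c : R) : 0 < s -> 0 < c ->
  is_RInt_gen (gamma_integrand s) (at_right 0) (at_point c) (lower_gamma s c) /\
  filterlim (fun b => RInt (gamma_integrand s) b c) (at_right 0) (locally (lower_gamma s c)).
Proof.
  intros Hs Hc.
  destruct (ex_RInt_gen_0_dominated (gamma_integrand s) (fun t => Rpower t (s - 1)) c (Rpower c s / s))
    as [l [Hl1 Hl2]]; auto.
  - intros u v Hu Hv. apply ex_RInt_gamma_integrand; auto.
  - intros u v Hu Hv. eexists. apply is_RInt_Rpower; auto.
  - intros t Ht. split; [left; apply gamma_integrand_pos | apply gamma_integrand_le_Rpower; lra].
  - apply (filterlim_ext_loc (fun b => Rpower c s / s + (- / s) * Rpower b s)).
    { exists (mkposreal c Hc). intros b _ Hb.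
      rewrite (is_RInt_unique _ _ _ _ (is_RInt_Rpower s b c Hs Hb Hc)). field. lra. }
    assert (H := filterlim_affine _ _ _ (Rpower c s / s) (- / s) (filterlim_Rpower_0 s Hs)).
    rewrite Rmult_0_r, Rplus_0_r in H. exact H.
  - replace (lower_gamma s c) with l by (symmetry; apply (is_RInt_gen_unique (gamma_integrand s)); auto).
    auto.
Qed.

Lemma Gamma_fun_split (s z : R) : 0 < s -> 0 < z -> Gamma_fun s = lower_gamma s z + upper_gamma s z.
Proof.
  intros Hs Hz. apply (is_RInt_gen_unique (gamma_integrand s)).
  apply (is_RInt_gen_Chasles (gamma_integrand s) z).
  - apply lower_gamma_spec; auto.
  - apply upper_gamma_spec; auto.
Qed.

Lemma upper_gamma_nat (m : nat) (z : R) : 0 < z -> upper_gamma (INR (S m)) z = INR (fact m) * poisson_cdf m z.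
Proof.
  intros Hz.
  apply (filterlim_locally_unique (F := Rbar_locally p_infty) _ _ _ (proj2 (upper_gamma_spec (INR (S m)) z Hz))).
  apply (filterlim_ext_loc (fun b => RInt (pow_exp m) z b)); [|apply filterlim_RInt_pow_exp_p_infty].
  exists z. intros b Hb. apply RInt_ext.
  intros t Ht. rewrite Rmin_left in Ht by lra. symmetry. apply gamma_integrand_nat. lra.
Qed.

Lemma lower_gamma_nat (m : nat) (c : R) : 0 < c -> lower_gamma (INR (S m)) c = INR (fact m) * (1 - poisson_cdf m c).
Proof.
  intros Hc. assert (Hs := INR_S_ge_1 m).
  apply (filterlim_locally_unique (F := at_right 0) _ _ _ (proj2 (lower_gamma_spec (INR (S m)) c ltac:(lra) Hc))).
  apply (filterlim_ext_loc (fun b => RInt (pow_exp m) b c)); [|apply filterlim_RInt_pow_exp_0].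
  exists (mkposreal c Hc). intros b _ Hb. apply RInt_ext.
  intros t Ht. assert (0 < Rmin b c) by (apply Rmin_glb_lt; auto). symmetry. apply gamma_integrand_nat. lra.
Qed.

Lemma Gamma_fun_nat (m : nat) : Gamma_fun (INR (S m)) = INR (fact m).
Proof.
  rewrite (Gamma_fun_split _ 1), upper_gamma_nat, lower_gamma_nat by (generalize (INR_S_ge_1 m); lra). ring.
Qed.

Lemma lower_gamma_nonneg (s c : R) : 0 < s -> 0 < c -> 0 <= lower_gamma s c.
Proof.
  intros Hs Hc.
  apply (filterlim_le_R (at_right 0) (fun _ => 0) (fun b => RInt (gamma_integrand s) b c));
    [| apply filterlim_const | apply lower_gamma_spec; auto].
  exists (mkposreal c Hc). intros b Hb Hb0.
  change (Rabs (b - 0) < c) in Hb. rewrite Rminus_0_r, Rabs_right in Hb by lra.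
  apply RInt_ge_0; [lra | apply ex_RInt_gamma_integrand; lra | intros; left; apply gamma_integrand_pos].
Qed.

Lemma RInt_le_upper_gamma (s z w : R) : 0 < z <= w -> RInt (gamma_integrand s) z w <= upper_gamma s z.
Proof.
  intros Hzw.
  apply (filterlim_le_R (Rbar_locally p_infty) (fun _ => RInt (gamma_integrand s) z w)
           (fun b => RInt (gamma_integrand s) z b));
    [| apply filterlim_const | apply upper_gamma_spec; lra].
  exists w. intros b Hb.
  rewrite <- (RInt_Chasles (gamma_integrand s) z w b) by (apply ex_RInt_gamma_integrand; lra).
  assert (0 <= RInt (gamma_integrand s) w b); [|unfold plus; simpl; lra].
  apply RInt_ge_0; [lra | apply ex_RInt_gamma_integrand; lra | intros; left; apply gamma_integrand_pos].
Qed.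

Lemma upper_gamma_pos (s z : R) : 0 < z -> 0 < upper_gamma s z.
Proof.
  intros Hz. eapply Rlt_le_trans; [|apply (RInt_le_upper_gamma s z (z + 1)); lra].
  apply RInt_gt_0; [lra | intros; apply gamma_integrand_pos | intros t Ht; apply continuous_gamma_integrand; lra].
Qed.

Lemma lower_gamma_le (s y : R) : 0 < s -> 0 < y -> lower_gamma s y <= Rpower y s / s.
Proof.
  intros Hs Hy.
  apply (filterlim_le_R (at_right 0) (fun b => RInt (gamma_integrand s) b y)
           (fun b => Rpower y s / s + (- / s) * Rpower b s)); [| apply lower_gamma_spec; auto |].
  - exists (mkposreal y Hy). intros b Hb Hb0.
    change (Rabs (b - 0) < y) in Hb. rewrite Rminus_0_r, Rabs_right in Hb by lra.
    apply Rle_trans with ((Rpower y s - Rpower b s) / s); [|right; field; lra].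
    rewrite <- (is_RInt_unique _ _ _ _ (is_RInt_Rpower s b y Hs Hb0 Hy)).
    apply RInt_le; [lra | apply ex_RInt_gamma_integrand; lra | eexists; apply is_RInt_Rpower; auto |].
    intros t Ht. apply gamma_integrand_le_Rpower. lra.
  - assert (H := filterlim_affine _ _ _ (Rpower y s / s) (- / s) (filterlim_Rpower_0 s Hs)).
    rewrite Rmult_0_r, Rplus_0_r in H. exact H.
Qed.

Lemma upper_gamma_ge (s y : R) : 1 <= s -> 0 < y ->
  Rpower (y + 1) (s - 1) * exp (- (y + 2)) <= upper_gamma s y.
Proof.
  intros Hs Hy. eapply Rle_trans; [|apply (RInt_le_upper_gamma s y (y + 2)); lra].
  rewrite <- (RInt_Chasles (gamma_integrand s) y (y + 1) (y + 2)) by (apply ex_RInt_gamma_integrand; lra).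
  assert (0 <= RInt (gamma_integrand s) y (y + 1)).
  { apply RInt_ge_0; [lra | apply ex_RInt_gamma_integrand; lra | intros; left; apply gamma_integrand_pos]. }
  assert (Rpower (y + 1) (s - 1) * exp (- (y + 2)) <= RInt (gamma_integrand s) (y + 1) (y + 2)).
  { apply Rle_trans with (RInt (fun _ => Rpower (y + 1) (s - 1) * exp (- (y + 2))) (y + 1) (y + 2)).
    { right. rewrite RInt_const. unfold scal; simpl; unfold mult; simpl. ring. }
    apply RInt_le; [lra | apply ex_RInt_const | apply ex_RInt_gamma_integrand; lra |].
    intros t Ht. apply Rmult_le_compat; try (left; apply Rpower_pos || apply exp_pos).
    - apply Rle_Rpower_l; lra.
    - apply exp_le_exp. lra. }
  unfold plus; simpl. lra.
Qed.

Lemma upper_gamma_ratio_bounds (s y : R) : 0 < s -> 0 < y ->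
  0 <= upper_gamma s y / Gamma_fun s <= 1.
Proof.
  intros Hs Hy. rewrite (Gamma_fun_split s y Hs Hy).
  assert (HA := lower_gamma_nonneg s y Hs Hy). assert (HB := upper_gamma_pos s y Hy).
  split; [apply Rdiv_le_0_compat; lra|].
  apply (Rmult_le_reg_r (lower_gamma s y + upper_gamma s y)); [lra|].
  field_simplify; lra.
Qed.

Lemma upper_gamma_ratio_near_1 (s y : R) : 1 <= s -> 0 < y ->
  Rabs (upper_gamma s y / Gamma_fun s - 1) <= y * exp (y + 2) / s.
Proof.
  intros Hs Hy. rewrite (Gamma_fun_split s y) by lra.
  assert (HA0 := lower_gamma_nonneg s y ltac:(lra) Hy). assert (HB0 := upper_gamma_pos s y Hy).
  assert (HA := lower_gamma_le s y ltac:(lra) Hy). assert (HB := upper_gamma_ge s y Hs Hy).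
  set (A := lower_gamma s y) in *. set (B := upper_gamma s y) in *.
  assert (HQ : Rpower (y + 1) (s - 1) <= exp (y + 2) * B).
  { replace (Rpower (y + 1) (s - 1)) with (exp (y + 2) * (Rpower (y + 1) (s - 1) * exp (- (y + 2))))
      by (rewrite exp_Ropp; field; apply exp_neq_0).
    apply Rmult_le_compat_l; [left; apply exp_pos | exact HB]. }
  assert (HyB : Rpower y s <= y * exp (y + 2) * B).
  { replace (Rpower y s) with (y * Rpower y (s - 1))
      by (rewrite <- (Rpower_1 y Hy) at 1; rewrite <- Rpower_plus; f_equal; ring).
    rewrite Rmult_assoc. apply Rmult_le_compat_l; [lra|].
    apply Rle_trans with (Rpower (y + 1) (s - 1)); [apply Rle_Rpower_l; lra | exact HQ]. }
  replace (B / (A + B) - 1) with (- (A / (A + B))) by (field; lra).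
  rewrite Rabs_Ropp, Rabs_right by (apply Rle_ge, Rdiv_le_0_compat; lra).
  apply (Rmult_le_reg_r ((A + B) * s)); [nra|].
  replace (A / (A + B) * ((A + B) * s)) with (A * s) by (field; lra).
  replace (y * exp (y + 2) / s * ((A + B) * s)) with (y * exp (y + 2) * (A + B)) by (field; lra).
  assert (A * s <= Rpower y s) by (apply (Rmult_le_reg_r (/ s)); [apply Rinv_0_lt_compat; lra|];
                                   replace (A * s * / s) with A by (field; lra); exact HA).
  assert (0 <= y * exp (y + 2) * A) by (apply Rmult_le_pos; [apply Rmult_le_pos; [lra | left; apply exp_pos] | lra]).
  nra.
Qed.

Lemma filterlim_upper_gamma_ratio_p_infty (k y : R) : 1 <= k -> 0 < y ->
  filterlim (fun e => upper_gamma (e * k) y / Gamma_fun (e * k)) (Rbar_locally p_infty) (locally 1).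
Proof.
  intros Hk Hy. apply (filterlim_bound_0 _ _ (fun e => (y * exp (y + 2) / k) / e)).
  - exists 1. intros e He.
    replace (y * exp (y + 2) / k / e) with (y * exp (y + 2) / (e * k)) by (field; lra).
    apply upper_gamma_ratio_near_1; auto. nra.
  - apply filterlim_div_p_infty.
Qed.

Lemma Rabs_exp_sub_1_le (u : R) : Rabs (exp u - 1) <= Rabs u * exp (Rabs u).
Proof.
  assert (Hinv : exp (- u) * exp u = 1) by (rewrite <- exp_plus, Rplus_opp_l; apply exp_0).
  destruct (Rle_dec 0 u) as [Hu|Hu].
  - assert (1 <= exp u) by (rewrite <- exp_0; apply exp_le_exp; lra).
    assert (Hle := exp_ineq1_le (- u)). rewrite !Rabs_right by lra. nra.
  - assert (exp u <= 1) by (rewrite <- exp_0; apply exp_le_exp; lra).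
    assert (1 <= exp (- u)) by (rewrite <- exp_0; apply exp_le_exp; lra).
    assert (Hle := exp_ineq1_le u). rewrite (Rabs_left u), Rabs_left1 by lra. nra.
Qed.

Lemma exp_Rabs_ln_le (t : R) : 0 < t -> exp (Rabs (ln t)) <= t + / t.
Proof.
  intros Ht. assert (0 < / t) by (apply Rinv_0_lt_compat; auto).
  unfold Rabs. destruct (Rcase_abs (ln t)).
  - rewrite <- ln_Rinv, exp_ln by auto. lra.
  - rewrite exp_ln by auto. lra.
Qed.

Lemma Rabs_Rpower_sub_1_le (t d : R) : 0 < t -> Rabs d <= 1 ->
  Rabs (Rpower t d - 1) <= Rabs d * (t + / t) ^ 2.
Proof.
  intros Ht Hd. unfold Rpower. eapply Rle_trans; [apply Rabs_exp_sub_1_le|].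
  set (L := Rabs (ln t)). assert (HL : 0 <= L) by apply Rabs_pos.
  assert (HeL := exp_Rabs_ln_le t Ht). fold L in HeL.
  assert (HLe : L <= exp L) by (generalize (exp_ineq1_le L); lra).
  assert (Hd0 := Rabs_pos d).
  assert (Hexp : exp (Rabs d * L) <= exp L) by (apply exp_le_exp; nra).
  assert (HexpL := exp_pos (Rabs d * L)).
  rewrite Rabs_mult. fold L.
  apply Rle_trans with (Rabs d * (exp L * exp L)); [|apply Rmult_le_compat_l; [lra | simpl; nra]].
  rewrite Rmult_assoc. apply Rmult_le_compat_l; [lra|]. apply Rmult_le_compat; lra.
Qed.

Lemma Rabs_gamma_integrand_sub_nat_le (m : nat) (s z t : R) :
  0 < z <= t -> Rabs (s - INR (S m)) <= 1 ->
  Rabs (gamma_integrand s t - pow_exp m t)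
    <= Rabs (s - INR (S m)) * (2 * pow_exp (S (S m)) t + 2 / z ^ 2 * pow_exp m t).
Proof.
  intros Hzt Hd. assert (Ht : 0 < t) by lra.
  set (d := s - INR (S m)) in *.
  assert (Hp : 0 <= pow_exp m t) by (apply Rmult_le_pos; [apply pow_le; lra | left; apply exp_pos]).
  replace (gamma_integrand s t - pow_exp m t) with (pow_exp m t * (Rpower t d - 1)).
  2: { unfold gamma_integrand, pow_exp.
       replace (s - 1) with (INR m + d) by (unfold d; rewrite S_INR; ring).
       rewrite Rpower_plus, Rpower_pow by auto. ring. }
  rewrite Rabs_mult, (Rabs_right (pow_exp m t)) by lra.
  eapply Rle_trans; [apply Rmult_le_compat_l; [exact Hp | apply Rabs_Rpower_sub_1_le; auto]|].
  replace (2 * pow_exp (S (S m)) t + 2 / z ^ 2 * pow_exp m t) with (pow_exp m t * (2 * t ^ 2 + 2 / z ^ 2))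
    by (unfold pow_exp; simpl; field; lra).
  assert ((t + / t) ^ 2 <= 2 * t ^ 2 + 2 / z ^ 2).
  { assert (0 <= (t - / t) ^ 2) by apply pow2_ge_0.
    assert (Hzt2 : / t <= / z) by (apply Rinv_le_contravar; lra).
    assert ((/ t) ^ 2 <= / z ^ 2) by (rewrite <- pow_inv; apply pow_incr; split; [left; apply Rinv_0_lt_compat |]; lra).
    assert (t * / t = 1) by (field; lra).
    unfold Rdiv. nra. }
  generalize (Rabs_pos d). intros. rewrite (Rmult_comm (pow_exp m t)), Rmult_assoc.
  apply Rmult_le_compat_l; [lra|]. rewrite Rmult_comm. apply Rmult_le_compat_l; lra.
Qed.

Lemma RInt_pow_exp_le_fact (m : nat) (u v : R) : 0 <= u <= v -> RInt (pow_exp m) u v <= INR (fact m).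
Proof.
  intros Huv. rewrite (is_RInt_unique _ _ _ _ (is_RInt_pow_exp m u v)).
  assert (H1 := poisson_cdf_le_1 m u ltac:(lra)). assert (H2 := poisson_cdf_nonneg m v ltac:(lra)).
  assert (Hf := INR_fact_lt_0 m).
  rewrite <- (Rmult_1_r (INR (fact m))) at 2. apply Rmult_le_compat_l; lra.
Qed.

Lemma ex_RInt_gamma_integrand_sub_pow_exp (s z b : R) (m : nat) : 0 < z -> 0 < b ->
  ex_RInt (fun t => gamma_integrand s t - pow_exp m t) z b.
Proof.
  intros Hz Hb. apply (@ex_RInt_minus R_NormedModule); [apply ex_RInt_gamma_integrand; lra|].
  apply (@ex_RInt_continuous R_CompleteNormedModule). intros; apply continuous_pow_exp.
Qed.

Lemma Rabs_RInt_gamma_integrand_sub_nat_le (m : nat) (s z b : R) :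
  0 < z <= b -> Rabs (s - INR (S m)) <= 1 ->
  Rabs (RInt (fun t => gamma_integrand s t - pow_exp m t) z b)
    <= Rabs (s - INR (S m)) * (2 * INR (fact (S (S m))) + 2 / z ^ 2 * INR (fact m)).
Proof.
  intros Hzb Hd. set (c := Rabs (s - INR (S m))). assert (Hc : 0 <= c) by apply Rabs_pos.
  assert (HI := @is_RInt_plus R_NormedModule _ _ z b _ _
                  (@is_RInt_scal R_NormedModule _ z b (c * 2) _ (is_RInt_pow_exp (S (S m)) z b))
                  (@is_RInt_scal R_NormedModule _ z b (c * (2 / z ^ 2)) _ (is_RInt_pow_exp m z b))).
  assert (Hex := ex_RInt_gamma_integrand_sub_pow_exp s z b m ltac:(lra) ltac:(lra)).
  eapply Rle_trans.
  - apply (norm_RInt_le (fun t => gamma_integrand s t - pow_exp m t) _ z b _ _ ltac:(lra))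
      with (2 := RInt_correct _ _ _ Hex) (3 := HI).
    intros t Ht. change (Rabs (gamma_integrand s t - pow_exp m t)
                        <= c * 2 * pow_exp (S (S m)) t + c * (2 / z ^ 2) * pow_exp m t).
    eapply Rle_trans; [apply (Rabs_gamma_integrand_sub_nat_le m s z t); lra|]. fold c. right; ring.
  - change (c * 2 * (INR (fact (S (S m))) * (poisson_cdf (S (S m)) z - poisson_cdf (S (S m)) b))
            + c * (2 / z ^ 2) * (INR (fact m) * (poisson_cdf m z - poisson_cdf m b))
            <= c * (2 * INR (fact (S (S m))) + 2 / z ^ 2 * INR (fact m))).
    rewrite <- !(is_RInt_unique _ _ _ _ (is_RInt_pow_exp _ z b)).
    assert (H2 := RInt_pow_exp_le_fact (S (S m)) z b ltac:(lra)).
    assert (H0 := RInt_pow_exp_le_fact m z b ltac:(lra)).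
    assert (0 <= 2 / z ^ 2) by (apply Rdiv_le_0_compat; [lra | apply pow_lt; lra]).
    assert (0 <= c * (2 / z ^ 2)) by (apply Rmult_le_pos; lra).
    assert (c * 2 * RInt (pow_exp (S (S m))) z b <= c * 2 * INR (fact (S (S m)))) by (apply Rmult_le_compat_l; lra).
    assert (c * (2 / z ^ 2) * RInt (pow_exp m) z b <= c * (2 / z ^ 2) * INR (fact m)) by (apply Rmult_le_compat_l; lra).
    lra.
Qed.

Lemma upper_gamma_lipschitz_nat (m : nat) (z s : R) : 0 < z -> Rabs (s - INR (S m)) <= 1 ->
  Rabs (upper_gamma s z - upper_gamma (INR (S m)) z)
    <= Rabs (s - INR (S m)) * (2 * INR (fact (S (S m))) + 2 / z ^ 2 * INR (fact m)).
Proof.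
  intros Hz Hd.
  apply (filterlim_Rabs_le (Rbar_locally p_infty)
           (fun b => RInt (gamma_integrand s) z b - RInt (gamma_integrand (INR (S m))) z b));
    [| exact (filterlim_minus_R _ _ _ _ _ (proj2 (upper_gamma_spec s z Hz))
                                          (proj2 (upper_gamma_spec (INR (S m)) z Hz)))].
  exists z. intros b Hb.
  rewrite (RInt_ext (gamma_integrand (INR (S m))) (pow_exp m))
    by (intros t Ht; rewrite Rmin_left in Ht by lra; apply gamma_integrand_nat; lra).
  assert (E : RInt (gamma_integrand s) z b - RInt (pow_exp m) z b = RInt (fun t => gamma_integrand s t - pow_exp m t) z b).
  { symmetry. apply is_RInt_unique, (@is_RInt_minus R_NormedModule);
      apply (@RInt_correct R_CompleteNormedModule); [apply ex_RInt_gamma_integrand; lra|].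
    apply (@ex_RInt_continuous R_CompleteNormedModule). intros; apply continuous_pow_exp. }
  rewrite E. apply Rabs_RInt_gamma_integrand_sub_nat_le; auto. lra.
Qed.

Lemma filterlim_Rabs_sub_scal (k C : R) : filterlim (fun s => Rabs (s - k) * C) (locally k) (locally 0).
Proof.
  assert (Hsub : continuous (fun s => s - k) k).
  { apply (@ex_derive_continuous R_AbsRing R_NormedModule). auto_derive. easy. }
  assert (Hscal : continuous (fun u => u * C) (Rabs (k - k))).
  { apply (@ex_derive_continuous R_AbsRing R_NormedModule). auto_derive. easy. }
  assert (H := continuous_comp _ _ k (continuous_comp _ Rabs k Hsub (continuous_Rabs _)) Hscal).
  unfold continuous in H. rewrite Rminus_diag_eq, Rabs_R0, Rmult_0_l in H by reflexivity. exact H.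
Qed.

Lemma continuous_upper_gamma_nat (m : nat) (z : R) : 0 < z -> continuous (fun s => upper_gamma s z) (INR (S m)).
Proof.
  intros Hz.
  apply (filterlim_bound_0 _ _ (fun s => Rabs (s - INR (S m)) * (2 * INR (fact (S (S m))) + 2 / z ^ 2 * INR (fact m)))).
  - exists (mkposreal 1 Rlt_0_1). intros s Hs. change (Rabs (s - INR (S m)) < 1) in Hs.
    apply upper_gamma_lipschitz_nat; auto. lra.
  - apply filterlim_Rabs_sub_scal.
Qed.

(* On (0,1] the integrand decreases in s, so the difference is controlled by
   int_0^1 (t^(s-1) - t^(r-1)) dt = 1/s - 1/r. *)
Lemma lower_gamma_1_sub_le (s r : R) : 0 < s -> s <= r -> Rabs (lower_gamma s 1 - lower_gamma r 1) <= / s - / r.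
Proof.
  intros Hs Hsr. assert (Hr : 0 < r) by lra.
  apply (filterlim_Rabs_le (at_right 0) (fun b => RInt (gamma_integrand s) b 1 - RInt (gamma_integrand r) b 1));
    [| exact (filterlim_minus_R _ _ _ _ _ (proj2 (lower_gamma_spec s 1 Hs Rlt_0_1))
                                          (proj2 (lower_gamma_spec r 1 Hr Rlt_0_1)))].
  exists (mkposreal 1 Rlt_0_1). intros b Hb Hb0.
  change (Rabs (b - 0) < 1) in Hb. rewrite Rminus_0_r, Rabs_right in Hb by lra.
  rewrite <- (RInt_minus (gamma_integrand s) (gamma_integrand r)) by (apply ex_RInt_gamma_integrand; lra).
  assert (Hmono : forall t, b <= t <= 1 -> 0 <= gamma_integrand s t - gamma_integrand r t
                                  <= Rpower t (s - 1) - Rpower t (r - 1)).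
  { intros t Ht. assert (Hln : ln t <= 0) by (rewrite <- ln_1; apply ln_le; lra).
    assert (Hp : Rpower t (r - 1) <= Rpower t (s - 1)) by (apply exp_le_exp; nra).
    assert (He1 : exp (- t) <= 1) by (rewrite <- exp_0; apply exp_le_exp; lra).
    assert (He0 := exp_pos (- t)).
    unfold gamma_integrand. split; nra. }
  apply Rle_trans with (RInt (fun t => Rpower t (s - 1) - Rpower t (r - 1)) b 1).
  - rewrite Rabs_right.
    + apply RInt_le; [lra | | |intros t Ht; apply Hmono; lra].
      * apply (@ex_RInt_minus R_NormedModule); apply ex_RInt_gamma_integrand; lra.
      * apply (@ex_RInt_minus R_NormedModule); eexists; apply is_RInt_Rpower; lra.
    + apply Rle_ge, RInt_ge_0; [lra | | intros t Ht; apply Hmono; lra].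
      apply (@ex_RInt_minus R_NormedModule); apply ex_RInt_gamma_integrand; lra.
  - assert (HI : is_RInt (fun t => Rpower t (s - 1) - Rpower t (r - 1)) b 1
                  ((Rpower 1 s - Rpower b s) / s - (Rpower 1 r - Rpower b r) / r))
      by (apply (@is_RInt_minus R_NormedModule); apply is_RInt_Rpower; lra).
    rewrite (is_RInt_unique _ _ _ _ HI), !Rpower_1_l.
    assert (Hbrs : Rpower b r <= Rpower b s).
    { assert (ln b < 0) by (rewrite <- ln_1; apply ln_increasing; lra). apply exp_le_exp. nra. }
    assert (Rpower b r / r <= Rpower b s / s).
    { unfold Rdiv. apply Rmult_le_compat; [left; apply Rpower_pos | left; apply Rinv_0_lt_compat; lra |
                                           exact Hbrs | apply Rinv_le_contravar; lra]. }
    replace ((1 - Rpower b s) / s - (1 - Rpower b r) / r) with (/ s - / r - (Rpower b s / s - Rpower b r / r))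
      by (field; lra).
    lra.
Qed.

Lemma continuous_lower_gamma_1 (k : R) : 0 < k -> continuous (fun s => lower_gamma s 1) k.
Proof.
  intros Hk. apply (filterlim_bound_0 _ _ (fun s => Rabs (/ s - / k))).
  - exists (mkposreal (k / 2) ltac:(lra)). intros s Hs.
    change (Rabs (s - k) < k / 2) in Hs. apply Rabs_lt_between in Hs.
    destruct (Rle_dec s k).
    + assert (/ k <= / s) by (apply Rinv_le_contravar; lra).
      rewrite (Rabs_right (/ s - / k)) by lra. apply lower_gamma_1_sub_le; lra.
    + assert (/ s <= / k) by (apply Rinv_le_contravar; lra).
      rewrite Rabs_minus_sym, (Rabs_minus_sym (/ s)), (Rabs_right (/ k - / s)) by lra.
      apply lower_gamma_1_sub_le; lra.
  - assert (H := filterlim_Rabs_R (locally k) _ _ (filterlim_minus_R (locally k) (fun s => / s) (fun _ => / k) _ _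
                   (continuous_Rinv k ltac:(lra)) (filterlim_const (/ k)))).
    rewrite Rminus_diag_eq, Rabs_R0 in H by reflexivity. exact H.
Qed.

Lemma continuous_Gamma_fun_nat (m : nat) : continuous Gamma_fun (INR (S m)).
Proof.
  assert (Hk : 0 < INR (S m)) by (generalize (INR_S_ge_1 m); lra).
  apply (filterlim_ext_loc (fun s => lower_gamma s 1 + upper_gamma s 1)).
  - exists (mkposreal _ Hk). intros s Hs. change (Rabs (s - INR (S m)) < INR (S m)) in Hs.
    apply Rabs_lt_between in Hs. rewrite (Gamma_fun_split s 1); lra.
  - rewrite (Gamma_fun_split _ 1 Hk Rlt_0_1).
    apply (@continuous_plus R_UniformSpace R_AbsRing R_NormedModule (fun s => lower_gamma s 1) (fun s => upper_gamma s 1)).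
    + apply continuous_lower_gamma_1; auto.
    + apply continuous_upper_gamma_nat; lra.
Qed.

Lemma filterlim_upper_gamma_ratio_1 (m : nat) (y : R) : 0 < y ->
  filterlim (fun e => upper_gamma (e * INR (S m)) y / Gamma_fun (e * INR (S m))) (Rbar_locally' 1)
    (locally (poisson_cdf m y)).
Proof.
  intros Hy. set (k := INR (S m)).
  assert (Hratio : continuous (fun s => upper_gamma s y / Gamma_fun s) k).
  { apply (@continuous_mult R_UniformSpace R_AbsRing (fun s => upper_gamma s y) (fun s => / Gamma_fun s)).
    - apply continuous_upper_gamma_nat; auto.
    - apply continuous_Rinv_comp; [apply continuous_Gamma_fun_nat|].
      unfold k; rewrite Gamma_fun_nat. apply INR_fact_neq_0. }
  replace (poisson_cdf m y) with (upper_gamma k y / Gamma_fun k)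
    by (unfold k; rewrite upper_gamma_nat, Gamma_fun_nat by auto; field; apply INR_fact_neq_0).
  apply (filterlim_comp _ _ _ (fun e => e * k) (fun s => upper_gamma s y / Gamma_fun s) _ (locally k)); auto.
  assert (Hscale : continuous (fun e => e * k) 1).
  { apply (@ex_derive_continuous R_AbsRing R_NormedModule). auto_derive. easy. }
  unfold continuous in Hscale. rewrite Rmult_1_l in Hscale.
  apply (filterlim_filter_le_1 (F := locally 1)); auto.
  intros P HP. apply filter_imp with (2 := HP). auto.
Qed.

(** * The Marcum Q-function on the diagonal *)

Definition bessel_I0_term (k : nat) (z : R) : R := (z / 2) ^ (2 * k) / INR (fact k) ^ 2.

Lemma bessel_I0_term_nonneg (k : nat) (z : R) : 0 <= bessel_I0_term k z.
Proof.
  apply Rdiv_le_0_compat; [rewrite pow_mult; apply pow_le, pow2_ge_0 | apply pow_lt, INR_fact_lt_0].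
Qed.

Lemma bessel_I0_term_le (k : nat) (z Z : R) : 0 <= z <= Z -> bessel_I0_term k z <= bessel_I0_term k Z.
Proof.
  intros Hz. unfold bessel_I0_term, Rdiv. apply Rmult_le_compat_r.
  - left. apply Rinv_0_lt_compat, pow_lt, INR_fact_lt_0.
  - apply pow_incr. lra.
Qed.

Lemma ex_series_bessel_I0 (z : R) : ex_series (fun k => bessel_I0_term k z).
Proof.
  apply (ex_series_Rabs_le _ (fun k => (z ^ 2 / 4) ^ k / INR (fact k))); [apply ex_series_exp|].
  intro k. rewrite Rabs_right by (apply Rle_ge, bessel_I0_term_nonneg).
  unfold bessel_I0_term. rewrite pow_mult. replace ((z / 2) ^ 2) with (z ^ 2 / 4) by field.
  assert (0 <= (z ^ 2 / 4) ^ k) by (apply pow_le; generalize (pow2_ge_0 z); lra).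
  assert (1 <= INR (fact k)) by (apply (le_INR 1), lt_O_fact).
  unfold Rdiv. apply Rmult_le_compat_l; auto. apply Rinv_le_contravar; [lra | simpl; nra].
Qed.

Lemma BesselI0_tail_le (z Z : R) (N : nat) : 0 <= z <= Z ->
  Rabs (BesselI0 z - sum_f_R0 (fun k => bessel_I0_term k z) N)
    <= BesselI0 Z - sum_f_R0 (fun k => bessel_I0_term k Z) N.
Proof.
  intros Hz. unfold BesselI0. fold (bessel_I0_term 0 z).
  change (Series (fun k => (z / 2) ^ (2 * k) / INR (fact k) ^ 2)) with (Series (fun k => bessel_I0_term k z)).
  change (Series (fun k => (Z / 2) ^ (2 * k) / INR (fact k) ^ 2)) with (Series (fun k => bessel_I0_term k Z)).
  rewrite (Series_incr_n (fun k => bessel_I0_term k z) (S N)),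
          (Series_incr_n (fun k => bessel_I0_term k Z) (S N)) by (lia || apply ex_series_bessel_I0).
  simpl pred. unfold Rminus. rewrite !(Rplus_comm (sum_f_R0 _ N)), !Rplus_assoc, !Rplus_opp_r, !Rplus_0_r.
  apply (Rabs_Series_tail_le (fun k => bessel_I0_term k z) (fun k => bessel_I0_term k Z) (S N));
    [apply ex_series_bessel_I0|].
  intro k. rewrite Rabs_right by (apply Rle_ge, bessel_I0_term_nonneg). apply bessel_I0_term_le; auto.
Qed.

Lemma filterlim_BesselI0_tail (Z : R) :
  filterlim (fun N => BesselI0 Z - sum_f_R0 (fun k => bessel_I0_term k Z) N) eventually (locally 0).
Proof.
  assert (H := Series_correct _ (ex_series_bessel_I0 Z)).
  assert (HS : filterlim (fun N => sum_f_R0 (fun k => bessel_I0_term k Z) N) eventually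
                 (locally (Series (fun k => bessel_I0_term k Z)))).
  { eapply filterlim_ext; [|exact H]. intro n. apply sum_n_Reals. }
  assert (L := filterlim_minus_R eventually (fun _ => Series (fun k => bessel_I0_term k Z)) _ _ _
                 (filterlim_const _) HS).
  rewrite Rminus_diag_eq in L by reflexivity. exact L.
Qed.

Definition marcum_term (m : nat) (t : R) : R := t * pow_exp m (t ^ 2 / 2).

Lemma is_RInt_marcum_term (m : nat) (a b : R) :
  is_RInt (marcum_term m) a b (INR (fact m) * (poisson_cdf m (a ^ 2 / 2) - poisson_cdf m (b ^ 2 / 2))).
Proof.
  assert (Hf : INR (fact m) <> 0) by apply INR_fact_neq_0.
  replace (INR (fact m) * (poisson_cdf m (a ^ 2 / 2) - poisson_cdf m (b ^ 2 / 2))) with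
    (minus (- INR (fact m) * poisson_cdf m (b ^ 2 / 2)) (- INR (fact m) * poisson_cdf m (a ^ 2 / 2)))
    by (unfold minus, plus, opp; simpl; ring).
  apply (@is_RInt_derive R_CompleteNormedModule (fun u => - INR (fact m) * poisson_cdf m (u ^ 2 / 2))).
  - intros t _. apply is_derive_Reals.
    replace (marcum_term m t) with (- INR (fact m) * ((- pow_exp m (t ^ 2 / 2) / INR (fact m)) * t))
      by (unfold marcum_term; field; auto).
    apply derivable_pt_lim_scal, (derivable_pt_lim_comp (fun u => u ^ 2 / 2) (poisson_cdf m)).
    + replace t with (INR 2 * t ^ 1 * / 2) at 2 by (simpl; field).
      apply (derivable_pt_lim_scal_right (fun u => u ^ 2)), derivable_pt_lim_pow.
    + apply is_derive_Reals, is_derive_poisson_cdf.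
  - intros t _. apply (@ex_derive_continuous R_AbsRing R_NormedModule).
    unfold marcum_term, pow_exp. auto_derive. easy.
Qed.

Section MarcumQ1Diagonal.
Variable y : R.
Hypothesis Hy : 0 < y.
Let a := sqrt (2 * y).

Lemma sqrt_2y_pos : 0 < a.
Proof. apply sqrt_lt_R0. lra. Qed.

Lemma sqrt_2y_sqr : a ^ 2 = 2 * y.
Proof. apply pow2_sqrt. lra. Qed.

Definition marcum_coef (m : nat) : R := exp (- y) * y ^ m / INR (fact m) ^ 2.

Definition marcum_partial_integrand (N : nat) (t : R) : R :=
  t * exp (- (t ^ 2 + a ^ 2) / 2) * sum_f_R0 (fun k => bessel_I0_term k (a * t)) N.

Definition marcum_piece (B : R) (m : nat) : R :=
  marcum_coef m * (INR (fact m) * (poisson_cdf m y - poisson_cdf m (B ^ 2 / 2))).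

Lemma marcum_integrand_term (m : nat) (t : R) :
  t * exp (- (t ^ 2 + a ^ 2) / 2) * bessel_I0_term m (a * t) = marcum_coef m * marcum_term m t.
Proof.
  unfold bessel_I0_term, marcum_coef, marcum_term, pow_exp. rewrite sqrt_2y_sqr.
  replace (- (t ^ 2 + 2 * y) / 2) with (- y + - (t ^ 2 / 2)) by field. rewrite exp_plus.
  rewrite pow_mult. replace ((a * t / 2) ^ 2) with (a ^ 2 * (t ^ 2 / 2) / 2) by field. rewrite sqrt_2y_sqr.
  replace (2 * y * (t ^ 2 / 2) / 2) with (y * (t ^ 2 / 2)) by field.
  rewrite Rpow_mult_distr. field. apply INR_fact_neq_0.
Qed.

Lemma is_RInt_marcum_partial_integrand (B : R) (N : nat) :
  is_RInt (marcum_partial_integrand N) a B (sum_f_R0 (marcum_piece B) N).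
Proof.
  assert (Ha : a ^ 2 / 2 = y) by (rewrite sqrt_2y_sqr; field).
  induction N as [|N IH].
  - assert (HI := @is_RInt_scal R_NormedModule _ a B (marcum_coef 0) _ (is_RInt_marcum_term 0 a B)).
    rewrite Ha in HI. eapply is_RInt_ext; [|exact HI].
    intros t _. unfold marcum_partial_integrand. simpl sum_f_R0. rewrite marcum_integrand_term. reflexivity.
  - assert (HI := @is_RInt_plus R_NormedModule _ _ a B _ _ IH
                    (@is_RInt_scal R_NormedModule _ a B (marcum_coef (S N)) _ (is_RInt_marcum_term (S N) a B))).
    rewrite Ha in HI. eapply is_RInt_ext; [|exact HI].
    intros t _. unfold marcum_partial_integrand. rewrite tech5, Rmult_plus_distr_l, marcum_integrand_term.
    reflexivity.
Qed.

Lemma Rabs_marcum_piece_le (B : R) (m : nat) : a <= B ->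
  Rabs (marcum_piece B m) <= exp (- y) * (y ^ m / INR (fact m)).
Proof.
  intros HB. assert (Hf := INR_fact_lt_0 m).
  assert (HB2 : y <= B ^ 2 / 2).
  { assert (a ^ 2 <= B ^ 2) by (apply pow_incr; generalize sqrt_2y_pos; lra). rewrite sqrt_2y_sqr in H. lra. }
  assert (H1 := poisson_cdf_decreasing m y (B ^ 2 / 2) ltac:(lra)).
  assert (H2 := poisson_cdf_le_1 m y ltac:(lra)). assert (H3 := poisson_cdf_nonneg m (B ^ 2 / 2) ltac:(nra)).
  assert (Hc : 0 <= exp (- y) * (y ^ m / INR (fact m))).
  { apply Rmult_le_pos; [left; apply exp_pos | apply Rdiv_le_0_compat; [apply pow_le; lra | auto]]. }
  unfold marcum_piece, marcum_coef.
  replace (exp (- y) * y ^ m / INR (fact m) ^ 2 * (INR (fact m) * (poisson_cdf m y - poisson_cdf m (B ^ 2 / 2))))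
    with (exp (- y) * (y ^ m / INR (fact m)) * (poisson_cdf m y - poisson_cdf m (B ^ 2 / 2))) by (field; lra).
  rewrite Rabs_right by (apply Rle_ge, Rmult_le_pos; lra).
  rewrite <- (Rmult_1_r (exp (- y) * (y ^ m / INR (fact m)))) at 2.
  apply Rmult_le_compat_l; lra.
Qed.

Lemma ex_series_exp_scal : ex_series (fun m => exp (- y) * (y ^ m / INR (fact m))).
Proof. apply (@ex_series_scal_l R_AbsRing R_NormedModule), ex_series_exp. Qed.

Lemma Rabs_marcum_partial_integrand_sub_le (B c : R) (N : nat) : a <= c <= B ->
  Rabs (marcum_partial_integrand N c - c * exp (- (c ^ 2 + a ^ 2) / 2) * BesselI0 (a * c))
    <= B * (BesselI0 (a * B) - sum_f_R0 (fun k => bessel_I0_term k (a * B)) N).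
Proof.
  intros Hc. assert (Ha := sqrt_2y_pos).
  unfold marcum_partial_integrand.
  replace (c * exp (- (c ^ 2 + a ^ 2) / 2) * sum_f_R0 (fun k => bessel_I0_term k (a * c)) N
           - c * exp (- (c ^ 2 + a ^ 2) / 2) * BesselI0 (a * c))
    with (- (c * exp (- (c ^ 2 + a ^ 2) / 2)) * (BesselI0 (a * c) - sum_f_R0 (fun k => bessel_I0_term k (a * c)) N))
    by ring.
  rewrite Rabs_mult, Rabs_Ropp, Rabs_right by (apply Rle_ge, Rmult_le_pos; [lra | left; apply exp_pos]).
  assert (Htail := BesselI0_tail_le (a * c) (a * B) N ltac:(split; nra)).
  assert (He : exp (- (c ^ 2 + a ^ 2) / 2) <= 1) by (rewrite <- exp_0; apply exp_le_exp; nra).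
  assert (He0 := exp_pos (- (c ^ 2 + a ^ 2) / 2)).
  apply Rmult_le_compat; [apply Rmult_le_pos; lra | apply Rabs_pos | nra | exact Htail].
Qed.

(* The partial integrands converge uniformly on [a, B]; clamping the argument to [a, B]
   turns this into the uniform convergence on the whole line required by [filterlim_RInt]. *)
Lemma is_RInt_marcum_integrand (B : R) : a < B ->
  is_RInt (fun t => t * exp (- (t ^ 2 + a ^ 2) / 2) * BesselI0 (a * t)) a B (Series (marcum_piece B)).
Proof.
  intros HB. assert (Ha := sqrt_2y_pos).
  set (h := fun t => t * exp (- (t ^ 2 + a ^ 2) / 2) * BesselI0 (a * t)).
  set (clamp := fun t => Rmax a (Rmin B t)).
  assert (Hclamp : forall t, a <= clamp t <= B).
  { intro t. unfold clamp. split; [apply Rmax_l | apply Rmax_lub; [lra | apply Rmin_l]]. }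
  assert (Hclamp_id : forall t, Rmin a B < t < Rmax a B -> clamp t = t).
  { intros t Ht. rewrite Rmin_left, Rmax_right in Ht by lra.
    unfold clamp. rewrite Rmin_right, Rmax_right; lra. }
  destruct (filterlim_RInt (V := R_CompleteNormedModule) (fun N t => marcum_partial_integrand N (clamp t)) a B
              eventually _ (fun t => h (clamp t)) (fun N => sum_f_R0 (marcum_piece B) N)) as [I [HIlim HI]].
  - intro N. eapply is_RInt_ext; [|apply is_RInt_marcum_partial_integrand].
    intros t Ht. rewrite Hclamp_id; auto.
  - apply filterlim_locally. intros eps.
    assert (Hd : 0 < eps / (B + 1)) by (apply Rdiv_lt_0_compat; [apply cond_pos | lra]).
    apply filter_imp with (2 := proj1 (filterlim_locally _ _) (filterlim_BesselI0_tail (a * B)) (mkposreal _ Hd)).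
    intros N HN t. change (Rabs (marcum_partial_integrand N (clamp t) - h (clamp t)) < eps).
    change (Rabs (BesselI0 (a * B) - sum_f_R0 (fun k => bessel_I0_term k (a * B)) N - 0) < eps / (B + 1)) in HN.
    rewrite Rminus_0_r in HN. apply Rabs_lt_between in HN.
    eapply Rle_lt_trans; [apply Rabs_marcum_partial_integrand_sub_le, Hclamp|].
    apply Rle_lt_trans with (B * (eps / (B + 1))); [apply Rmult_le_compat_l; lra|].
    apply (Rmult_lt_reg_r (B + 1)); [lra|].
    replace (B * (eps / (B + 1)) * (B + 1)) with (B * eps) by (field; lra).
    assert (0 < eps) by apply cond_pos. nra.
  - replace (Series (marcum_piece B)) with I.
    + eapply is_RInt_ext; [|exact HI]. intros t Ht. cbv beta. rewrite (Hclamp_id t Ht). reflexivity.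
    + apply (filterlim_locally_unique (F := eventually) (fun N => sum_f_R0 (marcum_piece B) N)); auto.
      assert (HS := Series_correct _ (ex_series_Rabs_le _ _ ex_series_exp_scal
                                        (fun m => Rabs_marcum_piece_le B m ltac:(lra)))).
      eapply filterlim_ext; [|exact HS]. intro n; apply sum_n_Reals.
Qed.

Lemma filterlim_half_sqr_p_infty :
  filterlim (fun B => B ^ 2 / 2) (Rbar_locally p_infty) (Rbar_locally p_infty).
Proof.
  intros P [M HM]. exists (Rmax 1 (2 * Rabs M)). intros B HB. apply HM.
  generalize (Rmax_l 1 (2 * Rabs M)) (Rmax_r 1 (2 * Rabs M)) (Rle_abs M). intros. nra.
Qed.

Lemma MarcumQ1_diag_series :
  MarcumQ1 a a = Series (fun m => marcum_coef m * (INR (fact m) * poisson_cdf m y)).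
Proof.
  apply (is_RInt_gen_unique (fun t => t * exp (- (t ^ 2 + a ^ 2) / 2) * BesselI0 (a * t))).
  apply (is_RInt_gen_at_point_l _ a _ (fun B => Series (marcum_piece B))).
  - exists a. intros B HB. apply is_RInt_marcum_integrand; auto.
  - apply (filterlim_Series_dominated _ marcum_piece _ (fun m => exp (- y) * (y ^ m / INR (fact m))));
      [apply ex_series_exp_scal | exists a; intros B HB m; apply Rabs_marcum_piece_le; lra |].
    intro m.
    assert (H := filterlim_comp _ _ _ _ _ _ _ _ filterlim_half_sqr_p_infty (filterlim_poisson_cdf_p_infty m)).
    assert (L := filterlim_affine _ _ _ (marcum_coef m * INR (fact m) * poisson_cdf m y)
                   (- (marcum_coef m * INR (fact m))) H).
    replace (marcum_coef m * (INR (fact m) * poisson_cdf m y))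
      with (marcum_coef m * INR (fact m) * poisson_cdf m y + - (marcum_coef m * INR (fact m)) * 0) by ring.
    eapply filterlim_ext; [|exact L]. intro B. unfold marcum_piece. simpl. ring.
Qed.

End MarcumQ1Diagonal.

Lemma MarcumQ1_diag (y : R) : 0 < y ->
  MarcumQ1 (sqrt (2 * y)) (sqrt (2 * y))
    = exp (- (2 * y)) * Series (fun n => y ^ n / INR (fact n) * sum_f_R0 (fun j => y ^ j / INR (fact j)) n).
Proof.
  intros Hy. rewrite MarcumQ1_diag_series by auto. rewrite <- Series_scal_l.
  apply Series_ext. intro n. unfold marcum_coef, poisson_cdf.
  replace (- (2 * y)) with (- y + - y) by ring. rewrite exp_plus. field. apply INR_fact_neq_0.
Qed.

(** * The expectation *)

Lemma pmf_Xstar_S (lam : R) (n : nat) : pmf_Xstar lam (S n) = exp (- lam) * (lam ^ n / INR (fact n)).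
Proof. unfold pmf_Xstar. replace (S n - 1)%nat with n by lia. unfold Rdiv. ring. Qed.

Lemma exp_mult_INR (u : R) (n : nat) : exp (u * INR n) = exp u ^ n.
Proof.
  induction n as [|n IH]; [simpl; rewrite Rmult_0_r; apply exp_0|].
  rewrite S_INR, Rmult_plus_distr_l, Rmult_1_r, exp_plus, IH. simpl. ring.
Qed.

Lemma E_Xstar_H_term (lam x s : R) (n : nat) :
  pmf_Xstar lam (S n) * (exp (- x * INR (S n)) * H lam x s)
  = exp (- lam) * exp (- x) * (exp (- lam) / (1 - exp (- lam)))
    * ((lam * exp (- x)) ^ n / INR (fact n)
       * (exp (lam * exp (- x)) * (upper_gamma s (lam * exp (- x)) / Gamma_fun s) - 1)).
Proof.
  rewrite pmf_Xstar_S, S_INR, Rmult_plus_distr_l, Rmult_1_r, exp_plus, exp_mult_INR, Rpow_mult_distr.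
  unfold H, Rdiv. ring.
Qed.

Lemma filterlim_E_Xstar_H (F : (R -> Prop) -> Prop) {FF : ProperFilter F} (lam x : R) (r : nat -> R) :
  0 < lam -> F (fun e => 0 < e) ->
  (forall n, filterlim (fun e => upper_gamma (e * INR (S n)) (lam * exp (- x)) / Gamma_fun (e * INR (S n)))
               F (locally (r n))) ->
  filterlim (fun e => E_Xstar lam (fun X => exp (- x * X) * H lam x (e * X))) F
    (locally (exp (- lam) * exp (- x) * (exp (- lam) / (1 - exp (- lam)))
              * Series (fun n => (lam * exp (- x)) ^ n / INR (fact n) * (exp (lam * exp (- x)) * r n - 1)))).
Proof.
  intros Hlam Hpos Hr. set (y := lam * exp (- x)).
  assert (Hy : 0 < y) by (apply Rmult_lt_0_compat; [lra | apply exp_pos]).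
  set (C := exp (- lam) * exp (- x) * (exp (- lam) / (1 - exp (- lam)))).
  assert (HC : 0 <= C).
  { assert (exp (- lam) < 1) by (rewrite <- exp_0; apply exp_increasing; lra).
    apply Rmult_le_pos; [apply Rmult_le_pos; left; apply exp_pos|].
    apply Rdiv_le_0_compat; [left; apply exp_pos | lra]. }
  unfold E_Xstar. rewrite <- Series_scal_l.
  apply (filterlim_Series_dominated F _ _ (fun n => C * (exp y + 1) * (y ^ n / INR (fact n)))).
  - apply (@ex_series_scal_l R_AbsRing R_NormedModule), ex_series_exp.
  - apply filter_imp with (2 := Hpos). intros e He n.
    rewrite E_Xstar_H_term. fold y C.
    assert (Hs : 0 < e * INR (S n)) by (apply Rmult_lt_0_compat; [auto | generalize (INR_S_ge_1 n); lra]).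
    destruct (upper_gamma_ratio_bounds _ y Hs Hy) as [R0 R1].
    assert (Hw : 0 <= y ^ n / INR (fact n)) by (apply Rdiv_le_0_compat; [apply pow_le; lra | apply INR_fact_lt_0]).
    assert (Hey := exp_pos y).
    rewrite Rabs_mult, Rabs_mult, (Rabs_right C), (Rabs_right (y ^ n / INR (fact n))) by lra.
    replace (C * (exp y + 1) * (y ^ n / INR (fact n))) with (C * (y ^ n / INR (fact n) * (exp y + 1))) by ring.
    apply Rmult_le_compat_l; [lra|]. apply Rmult_le_compat_l; [lra|].
    apply Rabs_le. nra.
  - intro n. apply (filterlim_ext (fun e => C * (- (y ^ n / INR (fact n)))
                                   + C * (y ^ n / INR (fact n) * exp y)
                                     * (upper_gamma (e * INR (S n)) y / Gamma_fun (e * INR (S n))))).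
    { intro e. rewrite E_Xstar_H_term. fold y C. ring. }
    replace (C * (y ^ n / INR (fact n) * (exp y * r n - 1)))
      with (C * (- (y ^ n / INR (fact n))) + C * (y ^ n / INR (fact n) * exp y) * r n) by ring.
    exact (filterlim_affine F _ _ _ _ (Hr n)).
Qed.

Lemma ex_series_exp_partial_sums (y : R) : 0 <= y ->
  ex_series (fun n => y ^ n / INR (fact n) * sum_f_R0 (fun j => y ^ j / INR (fact j)) n).
Proof.
  intros Hy. apply (ex_series_Rabs_le _ (fun n => exp y * (y ^ n / INR (fact n)))).
  - apply (@ex_series_scal_l R_AbsRing R_NormedModule), ex_series_exp.
  - intro n. assert (Hw : 0 <= y ^ n / INR (fact n)) by (apply Rdiv_le_0_compat; [apply pow_le | apply INR_fact_lt_0]; auto).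
    assert (Hs : 0 <= sum_f_R0 (fun j => y ^ j / INR (fact j)) n).
    { apply cond_pos_sum. intro j. apply Rdiv_le_0_compat; [apply pow_le | apply INR_fact_lt_0]; auto. }
    assert (Ht := exp_ge_taylor y n Hy).
    rewrite Rabs_right by (apply Rle_ge, Rmult_le_pos; auto).
    rewrite Rmult_comm. apply Rmult_le_compat_r; auto.
Qed.

Lemma E_Xstar_H_limit_1 (lam x : R) : 0 < lam ->
  exp (- lam) * exp (- x) * (exp (- lam) / (1 - exp (- lam)))
    * Series (fun n => (lam * exp (- x)) ^ n / INR (fact n)
                       * (exp (lam * exp (- x)) * poisson_cdf n (lam * exp (- x)) - 1))
  = exp (-2 * lam) / (1 - exp (- lam)) * exp (lam * exp (- x) - x) *
      (exp (lam * exp (- x)) * MarcumQ1 (sqrt (2 * lam * exp (- x))) (sqrt (2 * lam * exp (- x))) - 1).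
Proof.
  intros Hlam. set (y := lam * exp (- x)).
  assert (Hy : 0 < y) by (apply Rmult_lt_0_compat; [lra | apply exp_pos]).
  replace (2 * lam * exp (- x)) with (2 * y) by (unfold y; ring).
  rewrite MarcumQ1_diag by auto.
  rewrite (Series_ext _ (fun n => y ^ n / INR (fact n) * sum_f_R0 (fun j => y ^ j / INR (fact j)) n
                                  - y ^ n / INR (fact n)))
    by (intro n; unfold poisson_cdf; rewrite <- Rmult_assoc, <- exp_plus, Rplus_opp_r, exp_0; ring).
  rewrite Series_minus, Series_exp; [| apply ex_series_exp_partial_sums; lra | apply ex_series_exp].
  replace (-2 * lam) with (- lam + - lam) by ring. replace (y - x) with (y + - x) by ring.
  replace (- (2 * y)) with (- y + - y) by ring. rewrite !exp_plus.
  assert (exp (- lam) < 1) by (rewrite <- exp_0; apply exp_increasing; lra).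
  rewrite (exp_Ropp y). field. split; [apply exp_neq_0 | lra].
Qed.

Lemma E_Xstar_H_limit_p_infty (lam x : R) : 0 < lam ->
  exp (- lam) * exp (- x) * (exp (- lam) / (1 - exp (- lam)))
    * Series (fun n => (lam * exp (- x)) ^ n / INR (fact n) * (exp (lam * exp (- x)) * 1 - 1))
  = exp (-2 * lam) / (1 - exp (- lam)) * exp (lam * exp (- x) - x) * (exp (lam * exp (- x)) - 1).
Proof.
  intros Hlam. set (y := lam * exp (- x)).
  rewrite (Series_ext _ (fun n => (exp y - 1) * (y ^ n / INR (fact n)))) by (intro n; ring).
  rewrite Series_scal_l, Series_exp.
  replace (-2 * lam) with (- lam + - lam) by ring. replace (y - x) with (y + - x) by ring. rewrite !exp_plus.
  assert (exp (- lam) < 1) by (rewrite <- exp_0; apply exp_increasing; lra).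
  field. lra.
Qed.

Theorem mainTheorem5 (lam x : R) (hlam : 0 < lam) (hx : 0 < x) :
  is_lim (fun eps => E_Xstar lam (fun X => exp (- x * X) * H lam x (eps * X))) 1
    (Finite (exp (-2 * lam) / (1 - exp (- lam)) * exp (lam * exp (- x) - x) *
       (exp (lam * exp (- x)) *
          MarcumQ1 (sqrt (2 * lam * exp (- x))) (sqrt (2 * lam * exp (- x))) - 1)))
  /\
  is_lim (fun eps => E_Xstar lam (fun X => exp (- x * X) * H lam x (eps * X))) p_infty
    (Finite (exp (-2 * lam) / (1 - exp (- lam)) * exp (lam * exp (- x) - x) *
       (exp (lam * exp (- x)) - 1))).
Proof.
  assert (Hy : 0 < lam * exp (- x)) by (apply Rmult_lt_0_compat; [lra | apply exp_pos]).
  split; unfold is_lim; change (Rbar_locally (Finite ?L)) with (locally L).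
  - rewrite <- (E_Xstar_H_limit_1 lam x hlam).
    apply (filterlim_E_Xstar_H (Rbar_locally' 1)); [exact hlam | |].
    + exists (mkposreal (/ 2) ltac:(lra)). intros e He _.
      change (Rabs (e - 1) < / 2) in He. apply Rabs_lt_between in He. lra.
    + intro n. apply filterlim_upper_gamma_ratio_1; auto.
  - rewrite <- (E_Xstar_H_limit_p_infty lam x hlam).
    apply (filterlim_E_Xstar_H (Rbar_locally p_infty)); [exact hlam | |].
    + exists 0. auto.
    + intro n. apply filterlim_upper_gamma_ratio_p_infty; [apply INR_S_ge_1 | auto].
Qed.
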